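(* The typical subranks of real $3\times3\times5$ tensors are exactly $2$ and $3$.
   Context: For $r \geq 0$ let $I_r := \sum_{j=1}^r e_j \otimes e_j \otimes e_j$. The subrank of $T \in \mathbb{R}^{n_1} \otimes \mathbb{R}^{n_2} \otimes \mathbb{R}^{n_3}$ is $Q(T) := \max\{ r \mid \exists\ \mathbb{R}\text{-linear } \varphi_i : \mathbb{R}^{n_i} \to \mathbb{R}^r,\ (\varphi_1 \otimes \varphi_2 \otimes \varphi_3) T = I_r\}$. An integer $r$ is a typical subrank of the format $n_1\times n_2\times n_3$ if $\{T \mid Q(T) = r\}$ contains a nonempty Euclidean-open subset of $\mathbb{R}^{n_1} \otimes \mathbb{R}^{n_2} \otimes \mathbb{R}^{n_3}$. *)

From HB Require Import structures.
From mathcomp Require Import all_boot all_order all_algebra.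
From mathcomp Require Import reals.
Set Implicit Arguments. Unset Strict Implicit. Unset Printing Implicit Defensive.
Import Order.TTheory GRing.Theory Num.Theory.
Local Open Scope ring_scope.

(* A tensor in R^n1 (x) R^n2 (x) R^n3, given by its coordinates in the
   standard basis: T = sum_{i,j,k} T i j k e_i (x) e_j (x) e_k. *)
Definition tensor (R : Type) (n1 n2 n3 : nat) := 'I_n1 -> 'I_n2 -> 'I_n3 -> R.

Definition unit_tensor (R : realType) (r : nat) : tensor R r r r :=
  fun a b c => if (a == b) && (b == c) then 1 else 0.

(* (phi1 (x) phi2 (x) phi3) T, where the linear maps phi_i : R^{n_i} -> R^r
   are given by their r x n_i matrices A, B, C. *)
Definition tensor_map (R : realType) (n1 n2 n3 r : nat)
  (A : 'M[R]_(r, n1)) (B : 'M[R]_(r, n2)) (C : 'M[R]_(r, n3))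
  (T : tensor R n1 n2 n3) : tensor R r r r :=
  fun a b c => \sum_(i < n1) \sum_(j < n2) \sum_(k < n3)
                 A a i * B b j * C c k * T i j k.

Definition subrank_attains (R : realType) (n1 n2 n3 : nat)
  (T : tensor R n1 n2 n3) (r : nat) : Prop :=
  exists (A : 'M[R]_(r, n1)) (B : 'M[R]_(r, n2)) (C : 'M[R]_(r, n3)),
    tensor_map A B C T = @unit_tensor R r.

Definition subrank_is (R : realType) (n1 n2 n3 : nat)
  (T : tensor R n1 n2 n3) (r : nat) : Prop :=
  subrank_attains T r /\ forall s, subrank_attains T s -> (s <= r)%N.

(* {T | Q(T) = r} contains a nonempty Euclidean-open subset; equivalently
   it contains an open ball (we use the sup-norm ball on coordinates, which
   generates the same (Euclidean) topology). *)
Definition typical_subrank (R : realType) (n1 n2 n3 r : nat) : Prop :=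
  exists (T0 : tensor R n1 n2 n3) (eps : R), 0 < eps /\
    forall T : tensor R n1 n2 n3,
      (forall i j k, `|T i j k - T0 i j k| < eps) -> subrank_is T r.

(* The subrank of a 3 x 3 x 5 tensor is at most 3, and tensors of subrank at least 2 are
   dense: the 4 x 4 matrix of fibres [T i j] over rows {0, 1} and columns {0, 2}
   (restricted to four slices) becomes invertible after a small perturbation of [T], and
   an invertible fibre matrix yields a restriction to I_2.
   Near [Tsym], whose slices span the traceless symmetric matrices, the slice span of [T]
   contains no nonzero rank-one matrix, because a rank-one [M] satisfies
   [tr (M M) = (tr M)^2]; a restriction to I_3 would produce one, so the subrank is 2.
   Near [Tcyc], whose slice span contains E_00, E_11 and E_22, a contraction-mapping
   argument (together with the cyclic symmetry of [Tcyc]) gives three rank-one matrices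
   u_c v_c^T in the slice span with u_c, v_c close to e_c; inverting [u] and [v] restricts
   [T] to I_3. *)

From HB Require Import structures.
From mathcomp Require Import all_boot all_order all_algebra all_fingroup.
From mathcomp Require Import reals ring lra.
From mathcomp Require Import all_classical topology normedtype sequences.
Set Implicit Arguments. Unset Strict Implicit. Unset Printing Implicit Defensive.
Import Order.TTheory GRing.Theory Num.Theory.
Import numFieldTopology.Exports numFieldNormedType.Exports.
Local Open Scope ring_scope.

(* Re-declared so that HB also builds the complete normed module structure on
   real matrices, which [banach_fixed_point] needs. *)
HB.instance Definition _ (R : realType) m n :=
  Uniform_isComplete.Build 'M[R]_(m, n) (@mx_complete R m n).

(** * Contracting the third factor *)

Section Contraction.
Variables (R : realType) (n1 n2 n3 : nat).
Implicit Type T : tensor R n1 n2 n3.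

Definition slice T (k : 'I_n3) : 'M[R]_(n1, n2) := \matrix_(i, j) T i j k.

Definition contract3 T (w : 'rV[R]_n3) : 'M[R]_(n1, n2) := \sum_k w 0 k *: slice T k.

Lemma contract3E T w i j : contract3 T w i j = \sum_k w 0 k * T i j k.
Proof. by rewrite summxE; apply: eq_bigr => k _; rewrite !mxE. Qed.

Lemma tensor_mapE r (A : 'M[R]_(r, n1)) (B : 'M[R]_(r, n2)) (C : 'M[R]_(r, n3)) T a b c :
  tensor_map A B C T a b c = (A *m contract3 T (row c C) *m B^T) a b.
Proof.
rewrite mxE; under [RHS]eq_bigr do rewrite !mxE big_distrl /=.
rewrite exchange_big /=; apply: eq_bigr => i _; apply: eq_bigr => j _.
rewrite contract3E !mulr_sumr mulr_suml; apply: eq_bigr => k _; rewrite !mxE; ring.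
Qed.

Lemma subrank_attainsP T r : subrank_attains T r <->
  exists A B (C : 'M[R]_(r, n3)), forall c, A *m contract3 T (row c C) *m B^T = delta_mx c c.
Proof.
have unitE a b c : @unit_tensor R r a b c = delta_mx c c a b.
  rewrite /unit_tensor mxE.
  by case: (eqVneq b c) => [->|_]; rewrite ?andbT ?andbF /=; case: (a == c).
split=> [[A [B [C ABC]]]|[A [B [C ABC]]]]; exists A, B, C.
  by move=> c; apply/matrixP => a b; rewrite -unitE -ABC tensor_mapE.
by apply/funext => a; apply/funext => b; apply/funext => c; rewrite tensor_mapE ABC unitE.
Qed.

Lemma contract3_mul T m (y : 'rV[R]_m) (W : 'M[R]_(m, n3)) :
  contract3 T (y *m W) = \sum_q y 0 q *: contract3 T (row q W).
Proof.
rewrite /contract3; under eq_bigr do rewrite mxE scaler_suml.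
rewrite exchange_big /=; apply: eq_bigr => q _; rewrite scaler_sumr.
by apply: eq_bigr => k _; rewrite scalerA mxE.
Qed.

Lemma contract3_row1 T k : contract3 T (row k 1%:M) = slice T k.
Proof.
rewrite /contract3 (bigD1 k) //= big1 => [|k' /negbTE nkk'].
  by rewrite !mxE eqxx scale1r addr0.
by rewrite !mxE eq_sym nkk' scale0r.
Qed.

Lemma contract3_0 T : contract3 T 0 = 0.
Proof. by apply/matrixP => i j; rewrite contract3E mxE big1 // => k _; rewrite mxE mul0r. Qed.

Lemma contract3_split T T0 w :
  contract3 T w = contract3 T0 w + contract3 (fun i j k => T i j k - T0 i j k) w.
Proof.
apply/matrixP => i j; rewrite mxE !contract3E -big_split.
by apply: eq_bigr => k _ /=; ring.
Qed.

Lemma norm_contract3_le T w (e : R) : (forall i j k, `|T i j k| <= e) ->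
  forall i j, `|contract3 T w i j| <= e * \sum_k `|w 0 k|.
Proof.
move=> Te i j; rewrite contract3E mulr_sumr; apply: le_trans (ler_norm_sum _ _ _) _.
by apply: ler_sum => k _; rewrite normrM mulrC ler_wpM2r.
Qed.

Lemma mul_sum_contract3 T r (A : 'M[R]_(r, n1)) (B : 'M[R]_(r, n2)) (C : 'M[R]_(r, n3)) :
  (forall c, A *m contract3 T (row c C) *m B^T = delta_mx c c) ->
  A *m contract3 T (\sum_c row c C) *m B^T = 1%:M.
Proof.
have -> : contract3 T (\sum_c row c C) = \sum_c contract3 T (row c C).
  rewrite /contract3 exchange_big /=; apply: eq_bigr => k _.
  by rewrite summxE scaler_suml; apply: eq_bigr => c _; rewrite mxE.
move=> ABC; rewrite mulmx_sumr mulmx_suml mx1_sum_delta.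
by apply: eq_bigr => c _; rewrite ABC.
Qed.

Lemma subrank_attains_le T r : subrank_attains T r -> (r <= n1)%N.
Proof.
move=> /subrank_attainsP [A [B [C /mul_sum_contract3 ABC1]]].
rewrite -[r](mxrank1 R) -ABC1; apply: leq_trans (mxrankM_maxl _ _) _.
by apply: leq_trans (mxrankM_maxl _ _) _; exact: rank_leq_col.
Qed.

Lemma typical_subrank_le s : typical_subrank R n1 n2 n3 s -> (s <= n1)%N.
Proof.
move=> [T0 [eps [eps_gt0 near_T0]]].
have [T0_att _] : subrank_is T0 s by apply: near_T0 => i j k; rewrite subrr normr0.
exact: subrank_attains_le T0_att.
Qed.

End Contraction.

Section NearIdentity.
Variable R : realType.

Lemma unitmx_near1 n (M : 'M[R]_n) (e : R) : n%:R * e < 1 ->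
  (forall i j, `|M i j - (i == j)%:R| <= e) -> M \in unitmx.
Proof.
move=> ne1 Me; rewrite unitmxE unitfE; apply/negP => /det0P [v v_neq0 vM0].
case: n M v ne1 Me v_neq0 vM0 => [|n] M v ne1 Me v_neq0 vM0.
  by move/eqP: v_neq0; apply; apply/matrixP => ? [].
have [j _ vj_max] := @arg_maxP _ _ _ ord0 xpredT (fun j => `|v 0 j|) isT.
have e_ge0 : 0 <= e by apply: le_trans (Me ord0 ord0).
have vjE : - v 0 j = \sum_i v 0 i * (M i j - (i == j)%:R).
  have <- : (v *m (M - 1%:M)) 0 j = - v 0 j by rewrite mulmxBr mulmx1 vM0 sub0r mxE.
  by rewrite mxE; apply: eq_bigr => i _; rewrite !mxE.
have vj_le : `|v 0 j| <= n.+1%:R * e * `|v 0 j|.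
  have <- : \sum_(i < n.+1) e * `|v 0 j| = n.+1%:R * e * `|v 0 j|.
    by rewrite sumr_const card_ord -mulr_natl; ring.
  rewrite -{1}normrN vjE; apply: le_trans (ler_norm_sum _ _ _) _.
  apply: ler_sum => i _; rewrite normrM mulrC ler_pM //; exact: vj_max.
have vj0 : `|v 0 j| = 0.
  have ne1' : 0 < 1 - n.+1%:R * e by rewrite subr_gt0.
  apply/eqP; rewrite eq_le normr_ge0 andbT -(pmulr_rle0 _ ne1').
  by rewrite mulrBl mul1r subr_le0.
move/eqP: v_neq0; apply; apply/rowP => i; rewrite mxE.
by apply/normr0_eq0/eqP; rewrite eq_le normr_ge0 andbT -vj0; exact: vj_max.
Qed.

Lemma exists_unitmx_shift n (N : 'M[R]_n) (eps : R) : 0 < eps ->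
  exists2 d, 0 < d < eps & N + d%:M \in unitmx.
Proof.
move=> eps_gt0; pose d (m : nat) := eps / m.+2%:R.
have d_gt0 m : 0 < d m by rewrite divr_gt0.
have d_lt m : d m < eps by rewrite ltr_pdivrMr // ltr_pMr // ltr1n.
have [m d_unit | d_sing] := pickP (fun m : 'I_n.+1 => N + (d m)%:M \in unitmx).
  by exists (d m); rewrite ?d_gt0 ?d_lt.
(* A singular shift [d] is an eigenvalue of [- N], and [- N] has at most [n] of them. *)
have d_root m : (m < n.+1)%N -> root (char_poly (- N)) (d m).
  move=> lt_mn; have /negbT := d_sing (Ordinal lt_mn).
  rewrite unitmxE unitfE negbK => /det0P [v v_neq0 vN].
  rewrite -eigenvalue_root_char; apply/eigenvalueP; exists v => //.
  move: vN; rewrite mulmxDr mul_mx_scalar mulmxN => /eqP.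
  by rewrite addr_eq0 => /eqP ->; rewrite opprK.
suff : false by [].
have := @max_poly_roots _ (char_poly (- N)) [seq d m | m <- iota 0 n.+1].
rewrite size_map size_iota size_char_poly ltnn; apply.
- by rewrite monic_neq0 // char_poly_monic.
- by apply/allP => x /mapP [m]; rewrite mem_iota add0n => /andP [_ /d_root ?] ->.
rewrite map_inj_uniq ?iota_uniq // => m m' /(mulfI (lt0r_neq0 eps_gt0)).
by move/invr_inj/eqP; rewrite eqr_nat eqSS eqSS => /eqP.
Qed.

End NearIdentity.

(** * Fibre matrices and density of subrank at least [r] *)

Lemma index_pairs_iota m n i j : (i < m)%N -> (j < n)%N ->
  index (i, j) [seq (x, y) | x <- iota 0 m, y <- iota 0 n] = (i * n + j)%N.
Proof.
move=> lt_im lt_jn; rewrite -(subnKC (ltnW lt_im)) iotaD allpairs_cat index_cat.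
have -> : ((i, j) \in [seq (x, y) | x <- iota 0 i, y <- iota 0 n]) = false.
  apply/negbTE/negP => /allpairsP [[x y] /= [xi _ [ix _]]].
  by move: xi; rewrite -ix mem_iota add0n ltnn andbF.
have /prednK <- : (0 < m - i)%N by rewrite subn_gt0.
have pair_i_inj : injective (pair i : nat -> nat * nat) by move=> y y' [].
rewrite size_allpairs !size_iota add0n allpairs_cons index_cat.
rewrite (mem_map pair_i_inj) mem_iota lt_jn (index_map pair_i_inj); congr addn.
rewrite -[j]/(nat_of_ord (Ordinal lt_jn)) -val_enum_ord (index_map val_inj).
exact: index_enum_ord.
Qed.

Lemma mxvec_indexE m n (i : 'I_m) (j : 'I_n) : mxvec_index i j = (i * n + j)%N :> nat.
Proof.
rewrite /mxvec_index /enum_rank enum_rank_in.unlock /= insubdK; last first.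
  by rewrite cardE [_ \in _]index_mem mem_enum.
have val2_inj : injective (fun p : 'I_m * 'I_n => (val p.1, val p.2)).
  by move=> [? ?] [? ?] [/val_inj -> /val_inj ->].
rewrite enumT unlock /= /prod_enum -(index_map val2_inj) map_allpairs /=.
have -> : [seq (val x, val y) | x <- enum 'I_m, y <- enum 'I_n] =
          [seq (x, y) | x <- iota 0 m, y <- iota 0 n].
  by rewrite -!val_enum_ord allpairs_mapl allpairs_mapr.
exact: index_pairs_iota.
Qed.

Lemma mxsub_rowsub1 (R : realType) m1 m2 n1 n2 (f : 'I_m2 -> 'I_m1) (g : 'I_n2 -> 'I_n1)
    (M : 'M[R]_(m1, n1)) :
  rowsub f 1%:M *m M *m (rowsub g 1%:M)^T = mxsub f g M.
Proof. by rewrite -rowsubE trmx_mxsub trmx1 mulmx_colsub mulmx1 -mxsubcr. Qed.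

Section Fibres.
Variables (R : realType) (n1 n2 n3 r : nat).
Variables (f : 'I_r -> 'I_n1) (g : 'I_r -> 'I_n2) (h : 'I_(r * r) -> 'I_n3).
Implicit Type T : tensor R n1 n2 n3.

Definition fibre_mx T : 'M[R]_(r * r) := \matrix_q mxvec (mxsub f g (slice T (h q))).

Lemma fibre_mxE T q a b : fibre_mx T q (mxvec_index a b) = T (f a) (g b) (h q).
Proof. by rewrite mxE mxvecE !mxE. Qed.

Lemma mul_fibre_mx T y :
  y *m fibre_mx T = mxvec (mxsub f g (contract3 T (y *m rowsub h 1%:M))).
Proof.
rewrite contract3_mul mulmx_sum_row !linear_sum /=; apply: eq_bigr => q _.
by rewrite rowK row_rowsub contract3_row1 !linearZ.
Qed.

Lemma subrank_attains_fibre_unit T : fibre_mx T \in unitmx -> subrank_attains T r.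
Proof.
move=> F_unit; apply/subrank_attainsP.
(* Row [c] of [Y] combines the slices [h q] so that their [f] x [g] block is [delta_mx c c]. *)
pose Y := \matrix_c (mxvec (delta_mx c c) *m invmx (fibre_mx T)).
exists (rowsub f 1%:M), (rowsub g 1%:M), (Y *m rowsub h 1%:M) => c.
rewrite mxsub_rowsub1 row_mul; apply: (can_inj mxvecK).
by rewrite -mul_fibre_mx rowK mulmxKV.
Qed.

Hypotheses (f_inj : injective f) (g_inj : injective g) (h_inj : injective h).

Definition fibre_pert : tensor R n1 n2 n3 := fun i j k =>
  [exists a, exists b, [&& f a == i, g b == j & h (mxvec_index a b) == k]]%:R.

Lemma fibre_mx_pert : fibre_mx fibre_pert = 1%:M.
Proof.
apply/matrixP => q p; case/mxvec_indexP: p => a b; rewrite fibre_mxE mxE /fibre_pert.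
congr (nat_of_bool _)%:R; apply/existsP/eqP => [[a' /existsP [b' /and3P []]] | ->].
  by move=> /eqP/f_inj -> /eqP/g_inj -> /eqP/h_inj ->.
by exists a; apply/existsP; exists b; rewrite !eqxx.
Qed.

Lemma fibre_mx_shift T T' (d : R) :
  fibre_mx (fun i j k => T i j k + d * T' i j k) = fibre_mx T + d *: fibre_mx T'.
Proof.
apply/matrixP => q p; case/mxvec_indexP: p => a b.
by rewrite fibre_mxE !mxE !mxvecE !mxE.
Qed.

Lemma subrank_attains_dense T0 (eps : R) : 0 < eps ->
  exists T, (forall i j k, `|T i j k - T0 i j k| < eps) /\ subrank_attains T r.
Proof.
move=> eps_gt0; have [d /andP [d_gt0 d_lt] F_unit] := exists_unitmx_shift (fibre_mx T0) eps_gt0.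
exists (fun i j k => T0 i j k + d * fibre_pert i j k); split.
  move=> i j k; rewrite addrC addKr normrM gtr0_norm //; apply: (le_lt_trans _ d_lt).
  apply: ler_piMr; first exact: ltW.
  by rewrite /fibre_pert; case: [exists _, _]; rewrite ?normr1 ?normr0.
by apply: subrank_attains_fibre_unit; rewrite fibre_mx_shift fibre_mx_pert scalemx1.
Qed.

Lemma typical_subrank_ge s : typical_subrank R n1 n2 n3 s -> (r <= s)%N.
Proof.
move=> [T0 [eps [eps_gt0 near_T0]]]; have [T [T_near T_att]] := subrank_attains_dense T0 eps_gt0.
by have [_] := near_T0 T T_near; apply.
Qed.

End Fibres.

(** * Rank-one matrices near traceless symmetric ones *)

Section Frobenius.
Variable R : realType.

Lemma sqr_sum_le n (a : 'I_n -> R) : (\sum_i a i) ^+ 2 <= n%:R * \sum_i a i ^+ 2.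
Proof.
have -> : (\sum_i a i) ^+ 2 = \sum_i \sum_j a i * a j.
  by rewrite expr2 mulr_suml; apply: eq_bigr => i _; rewrite mulr_sumr.
have sum_sqr2 : \sum_i \sum_j (a i ^+ 2 + a j ^+ 2) = 2 * (n%:R * \sum_i a i ^+ 2).
  under eq_bigr do rewrite big_split sumr_const card_ord /=.
  by rewrite big_split /= sumr_const card_ord sumrMnl !mulr_natl mulr2n.
rewrite -(ler_pM2l (_ : 0 < 2)) // -sum_sqr2 mulr_sumr; apply: ler_sum => i _.
rewrite mulr_sumr; apply: ler_sum => j _; rewrite -subr_ge0.
have -> : a i ^+ 2 + a j ^+ 2 - 2 * (a i * a j) = (a i - a j) ^+ 2 by ring.
exact: sqr_ge0.
Qed.

Lemma sqr_le_of_norm_le (x e : R) : `|x| <= e -> x ^+ 2 <= e ^+ 2.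
Proof. by rewrite ler_norml => /andP [? ?]; nra. Qed.

Definition frob2 m n (A : 'M[R]_(m, n)) := \sum_i \sum_j A i j ^+ 2.

Lemma frob2_le m n (A : 'M[R]_(m, n)) (e : R) :
  (forall i j, `|A i j| <= e) -> frob2 A <= (m * n)%:R * e ^+ 2.
Proof.
move=> Ae; have -> : (m * n)%:R * e ^+ 2 = \sum_(i < m) \sum_(j < n) e ^+ 2.
  by rewrite !sumr_const !card_ord -mulrnA mulr_natl mulnC.
by apply: ler_sum => i _; apply: ler_sum => j _; exact: sqr_le_of_norm_le.
Qed.

Lemma frob2D_le m n (A B : 'M[R]_(m, n)) : frob2 (A + B) <= 2 * (frob2 A + frob2 B).
Proof.
rewrite /frob2 -big_split mulr_sumr; apply: ler_sum => i _.
rewrite -big_split mulr_sumr; apply: ler_sum => j _; rewrite mxE -subr_ge0.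
have -> : 2 * (A i j ^+ 2 + B i j ^+ 2) - (A i j + B i j) ^+ 2 = (A i j - B i j) ^+ 2 by ring.
exact: sqr_ge0.
Qed.

Lemma frob2_skew n (M : 'M[R]_n) : frob2 (M - M^T) = 2 * (frob2 M - \tr (M *m M)).
Proof.
have frob2_tr : frob2 M^T = frob2 M.
  by rewrite /frob2 exchange_big; apply: eq_bigr => i _; apply: eq_bigr => j _; rewrite mxE.
have -> : \tr (M *m M) = \sum_i \sum_j M i j * M^T i j.
  by apply: eq_bigr => i _; rewrite mxE; apply: eq_bigr => j _; rewrite mxE.
rewrite mulrBr mulr_natl mulr2n -{2}frob2_tr /frob2 -!big_split /= mulr_sumr -sumrB.
apply: eq_bigr => i _; rewrite -!big_split mulr_sumr -sumrB /=.
by apply: eq_bigr => j _; rewrite !mxE; ring.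
Qed.

Lemma mxtrace_rank_one_sqr n (u : 'cV[R]_n) (v : 'rV[R]_n) :
  \tr (u *m v *m (u *m v)) = \tr (u *m v) ^+ 2.
Proof.
have tr_uv : \tr (u *m v) = (v *m u) 0 0 by rewrite mxtrace_mulC trace_mx11.
rewrite -mulmxA (mulmxA v) [v *m u]mx11_scalar mul_scalar_mx -scalemxAr.
by rewrite mxtraceZ tr_uv expr2.
Qed.

Lemma frob2_sym_traceless_rank_one n (S D : 'M[R]_n) (u : 'cV[R]_n) (v : 'rV[R]_n) (d : R) :
  S^T = S -> \tr S = 0 -> (forall i j, `|D i j| <= d) -> S + D = u *m v ->
  frob2 S <= 8 * n%:R ^+ 2 * d ^+ 2.
Proof.
move=> S_sym S_tr0 D_le SD_uv; set K := n%:R ^+ 2 * d ^+ 2.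
(* [tr (M M) = (tr M)^2] for the rank-one [M = S + D], and since [S] is symmetric and
   traceless, this identity bounds the size of [M], hence of [S], in terms of [D] alone. *)
have trD : \tr (S + D) = \tr D by rewrite mxtraceD S_tr0 add0r.
have trSD_sqr : \tr ((S + D) *m (S + D)) = \tr D ^+ 2.
  by rewrite SD_uv mxtrace_rank_one_sqr -SD_uv trD.
have skew : (S + D) - (S + D)^T = D - D^T.
  by rewrite linearD /= S_sym opprD addrACA subrr add0r.
have frob2_SD : 2 * frob2 (S + D) = 2 * \tr D ^+ 2 + frob2 (D - D^T).
  by rewrite -skew frob2_skew trSD_sqr; ring.
have trD_le : \tr D ^+ 2 <= K.
  suff /sqr_le_of_norm_le : `|\tr D| <= n%:R * d by rewrite exprMn.
  have -> : n%:R * d = \sum_(i < n) d by rewrite sumr_const card_ord mulr_natl.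
  by apply: le_trans (ler_norm_sum _ _ _) _; apply: ler_sum => i _.
have skew_le : frob2 (D - D^T) <= 4 * K.
  have -> : 4 * K = (n * n)%:R * (2 * d) ^+ 2 by rewrite /K natrM; ring.
  apply: frob2_le => i j; rewrite !mxE; apply: le_trans (ler_normB _ _) _.
  by rewrite mulr_natl mulr2n lerD.
have frob2_D : frob2 (- D) <= K.
  have -> : K = (n * n)%:R * d ^+ 2 by rewrite /K natrM expr2.
  by apply: frob2_le => i j; rewrite mxE normrN.
have frob2_SD_le : frob2 (S + D) <= 3 * K by lra.
have := frob2D_le (S + D) (- D); rewrite addrK -mulrA -/K; lra.
Qed.

End Frobenius.

(** * Subrank from rank-one slices *)

Definition near_delta (R : realType) n (c : 'I_n) (u : 'cV[R]_n) :=
  u c 0 = 1 /\ forall i, i != c -> `|u i 0| <= 1 / 10.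

Section Reindex.
Variables (R : realType) (n m : nat) (T : tensor R n n m).
Variables (s : {perm 'I_n}) (t : {perm 'I_m}).

Lemma contract3_perm w :
  contract3 (fun i j k => T (s i) (s j) (t k)) w =
  mxsub s s (contract3 T (col_perm t^-1%g w)).
Proof.
apply/matrixP => i j; rewrite mxE !contract3E [RHS](reindex_inj (@perm_inj _ t)).
by apply: eq_bigr => k _; rewrite mxE permK.
Qed.

Lemma rank_one_slice_perm w (u v : 'cV[R]_n) :
  contract3 (fun i j k => T (s i) (s j) (t k)) w = u *m v^T ->
  contract3 T (col_perm t^-1%g w) = row_perm s^-1%g u *m (row_perm s^-1%g v)^T.
Proof.
rewrite contract3_perm => /matrixP uv; apply/matrixP => i j.
have := uv (s^-1%g i) (s^-1%g j); rewrite !mxE !permKV => ->.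
by rewrite !big_ord1 !mxE.
Qed.

Lemma near_delta_perm c (u : 'cV[R]_n) :
  near_delta c u -> near_delta (s c) (row_perm s^-1%g u).
Proof.
move=> [u_c u_i]; split=> [|i i_neq]; rewrite mxE ?permK //.
by apply: u_i; apply: contra i_neq => /eqP <-; rewrite permKV.
Qed.

End Reindex.

Lemma subrank_attains_rank_one (R : realType) n m (T : tensor R n n m) (U V : 'M[R]_n)
    (X : 'M[R]_(n, m)) : U \in unitmx -> V \in unitmx ->
  (forall c, contract3 T (row c X) = col c U *m (col c V)^T) -> subrank_attains T n.
Proof.
move=> U_unit V_unit slices; apply/subrank_attainsP; exists (invmx U), (invmx V), X => c.
rewrite slices !colE trmx_mul trmx_delta !mulmxA mulVmx // mul1mx -mulmxA -trmx_mul.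
by rewrite mulVmx // trmx1 mulmx1 mul_delta_mx.
Qed.

(** * A contraction-mapping lemma in the sup norm *)

Section FixedPoint.
Variable R : realType.

Lemma rV_norm_leP n (z : 'rV[R]_n) (e : R) :
  0 <= e -> `|z| <= e <-> forall m, `|z 0 m| <= e.
Proof.
move=> e_ge0; have -> : `|z| = mx_norm z by [].
rewrite mx_normrE; split.
  by move=> /bigmax_leP [_ ze] m; exact: (ze (0, m)).
by move=> ze; apply/bigmax_leP; split => // -[a m] _; rewrite (ord1 a).
Qed.

Lemma sup_ball_fixed_point n (G : 'rV[R]_n -> 'rV[R]_n) (z0 : 'rV[R]_n) (r q : R) :
  0 < r -> 0 <= q < 1 ->
  (forall z : 'rV_n,
    (forall m, `|z 0 m - z0 0 m| <= r) -> forall m, `|G z 0 m - z0 0 m| <= r) ->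
  (forall (z z' : 'rV_n) N,
    (forall m, `|z 0 m - z0 0 m| <= r) -> (forall m, `|z' 0 m - z0 0 m| <= r) ->
    (forall m, `|z 0 m - z' 0 m| <= N) -> forall m, `|G z 0 m - G z' 0 m| <= q * N) ->
  exists2 z : 'rV_n, (forall m, `|z 0 m - z0 0 m| <= r) & G z = z.
Proof.
move=> r_gt0 /andP [q_ge0 q_lt1] G_ball G_lip.
pose U := closed_ball z0 r.
have UE z : U z <-> forall m, `|z 0 m - z0 0 m| <= r.
  rewrite /U closed_ballE // /closed_ball_ /= -normrN opprB rV_norm_leP ?ltW //.
  by split=> zr m; move: (zr m); rewrite !mxE.
have GU : {homo G : z / U z >-> U z} by move=> z /UE /G_ball /UE.
have G_contraction : is_contraction (mkfun_fun GU).
  exists (interval_inference.NngNum q_ge0); split => //= -[z z'] [/= /UE Uz /UE Uz'].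
  apply/rV_norm_leP; first by apply: mulr_ge0 => //; exact: normr_ge0.
  move=> m; rewrite !mxE /=; apply: G_lip => // m'.
  by have /rV_norm_leP := lexx `|z - z'|; move=> /(_ (normr_ge0 _) m'); rewrite !mxE.
have [|z Uz Gz] :=
  @banach_fixed_point R 'rV[R]_n U _ G_contraction (@closed_ball_closed _ _ z0 r).
  by exists z0; apply/UE => m; rewrite subrr normr0 ltW.
by exists z; [exact/UE | rewrite {2}Gz].
Qed.

End FixedPoint.

(** * The witness for typical subrank 2 *)

Section SymTraceless.
Variable R : realType.

Definition sym_unit (p q : nat) (i j : 'I_3) : R :=
  (((i == p :> nat) && (j == q :> nat)) || ((i == q :> nat) && (j == p :> nat)))%:R.

Definition Tsym : tensor R 3 3 5 := fun i j k =>
  match (k : nat) with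
  | 0 => sym_unit 0 0 i j - sym_unit 1 1 i j
  | 1 => sym_unit 0 2 i j
  | 2 => sym_unit 0 1 i j
  | 3 => sym_unit 1 2 i j
  | _ => sym_unit 0 0 i j + sym_unit 1 1 i j - 2 * sym_unit 2 2 i j
  end.

Lemma Tsym_sym i j k : Tsym j i k = Tsym i j k.
Proof.
by case: i => [[|[|[|//]]] ?]; case: j => [[|[|[|//]]] ?]; case: k => [[|[|[|[|[|//]]]]] ?].
Qed.

Lemma Tsym_traceless k : \sum_i Tsym i i k = 0.
Proof.
rewrite !big_ord_recr big_ord0 /=.
by case: k => [[|[|[|[|[|//]]]]] ?]; rewrite /Tsym /sym_unit /=; ring.
Qed.

Lemma frob2_contract3_Tsym (w : 'rV[R]_5) :
  frob2 (contract3 Tsym w) = 2 * \sum_k w 0 k ^+ 2 + 4 * w 0 ord_max ^+ 2.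
Proof.
rewrite /frob2 !big_ord_recr !big_ord0 !contract3E !big_ord_recr !big_ord0 /=.
by rewrite /Tsym /sym_unit /=; ring.
Qed.

Lemma contract3_Tsym_sym w : (contract3 Tsym w)^T = contract3 Tsym w.
Proof.
by apply/matrixP => i j; rewrite mxE !contract3E; apply: eq_bigr => k _; rewrite Tsym_sym.
Qed.

Lemma contract3_Tsym_traceless w : \tr (contract3 Tsym w) = 0.
Proof.
rewrite /mxtrace; under eq_bigr do rewrite contract3E.
by rewrite exchange_big big1 // => k _; rewrite -mulr_sumr Tsym_traceless mulr0.
Qed.

(* Rows {0, 1}, columns {0, 2} and slices {0, ..., 3}: on these the fibres of [Tsym]
   form an identity matrix. *)
Definition pick_rows : 'I_2 -> 'I_3 := lift ord_max.
Definition pick_cols : 'I_2 -> 'I_3 := lift (@Ordinal 3 1 isT).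
Definition pick_slices : 'I_(2 * 2) -> 'I_5 := lift ord_max.

Lemma fibre_mx_Tsym : fibre_mx pick_rows pick_cols pick_slices Tsym = 1%:M.
Proof.
apply/matrixP => q p; case/mxvec_indexP: p => a b.
rewrite fibre_mxE mxE -(inj_eq (@ord_inj _)) mxvec_indexE.
case: q => [[|[|[|[|//]]]] ?]; case: a => [[|[|//]] ?]; case: b => [[|[|//]] ?];
  by rewrite /Tsym /sym_unit /= ?subr0 ?subrr ?mulr0.
Qed.

Lemma contract3_near_Tsym_rank_one (T : tensor R 3 3 5) (w : 'rV[R]_5)
    (u : 'cV[R]_3) (v : 'rV[R]_3) :
  (forall i j k, `|T i j k - Tsym i j k| < 1 / 20) -> contract3 T w = u *m v -> w = 0.
Proof.
move=> T_near Tw_uv.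
have D_le := norm_contract3_le w (fun i j k => ltW (T_near i j k)).
have := frob2_sym_traceless_rank_one (contract3_Tsym_sym w) (contract3_Tsym_traceless w) D_le.
rewrite -contract3_split frob2_contract3_Tsym => /(_ _ _ Tw_uv).
have d_le : (1 / 20 * \sum_k `|w 0 k|) ^+ 2 <= 5 / 400 * \sum_k w 0 k ^+ 2.
  have := sqr_sum_le (fun k => `|w 0 k|).
  have -> : \sum_k `|w 0 k| ^+ 2 = \sum_k w 0 k ^+ 2.
    by apply: eq_bigr => k _; rewrite real_normK ?num_real.
  rewrite exprMn; lra.
have sum_ge0 : 0 <= \sum_k w 0 k ^+ 2 by apply: sumr_ge0 => k _; exact: sqr_ge0.
(* [frob2 (contract3 Tsym w)] is at least [2 * \sum_k w_k^2], but also at most [72 d^2]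
   with [d = 1/20 * \sum_k |w_k|], and [72 d^2 <= 9/10 * \sum_k w_k^2]. *)
have := sqr_ge0 (w 0 ord_max) => w4_ge0 frob_le.
have sum0 : \sum_k w 0 k ^+ 2 = 0 by lra.
apply/rowP => k; rewrite mxE; apply/eqP; rewrite -sqrf_eq0; apply/eqP.
exact: (psumr_eq0P (fun k _ => sqr_ge0 (w 0 k)) sum0).
Qed.

Lemma near_Tsym_not_attains3 (T : tensor R 3 3 5) :
  (forall i j k, `|T i j k - Tsym i j k| < 1 / 20) -> ~ subrank_attains T 3.
Proof.
move=> T_near /subrank_attainsP [A [B [C ABC]]].
have ABC1 := mul_sum_contract3 ABC.
have [A_unit _] := mulmx1_unit (etrans (mulmxA _ _ _) ABC1).
have [_ BT_unit] := mulmx1_unit ABC1.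
have rank_one : contract3 T (row 0 C) =
    (invmx A *m delta_mx 0 (0 : 'I_1)) *m (delta_mx (0 : 'I_1) 0 *m invmx B^T).
  rewrite -mulmxA (mulmxA (delta_mx _ _)) mul_delta_mx -(ABC 0).
  by rewrite !mulmxA mulVmx // mul1mx -mulmxA mulmxV // mulmx1.
have := ABC 0; rewrite (contract3_near_Tsym_rank_one T_near rank_one) contract3_0.
rewrite mulmx0 mul0mx => /matrixP /(_ 0 0).
by rewrite !mxE eqxx => /eqP; rewrite eq_sym oner_eq0.
Qed.

Lemma near_Tsym_attains2 (T : tensor R 3 3 5) :
  (forall i j k, `|T i j k - Tsym i j k| < 1 / 20) -> subrank_attains T 2.
Proof.
move=> T_near.
apply: (subrank_attains_fibre_unit (f := pick_rows) (g := pick_cols) (h := pick_slices)).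
apply: (unitmx_near1 (e := 1 / 20)); first lra.
move=> q p; have -> : (q == p)%:R = 1%:M q p :> R by rewrite mxE.
rewrite -fibre_mx_Tsym.
by case/mxvec_indexP: p => a b; rewrite !fibre_mxE ltW.
Qed.

Lemma typical_subrank_Tsym : typical_subrank R 3 3 5 2.
Proof.
exists Tsym, (1 / 20); split=> [|T T_near]; first lra.
split=> [|s s_att]; first exact: near_Tsym_attains2.
have := subrank_attains_le s_att; rewrite leq_eqVlt => /orP [/eqP s3 | //].
by move: s_att; rewrite s3 => /(near_Tsym_not_attains3 T_near).
Qed.

End SymTraceless.

(** * The witness for typical subrank 3 *)

Lemma normr_mulB_le (R : realType) (p q p' q' r N : R) :
  `|p| <= r -> `|q'| <= r -> `|p - p'| <= N -> `|q - q'| <= N ->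
  `|p * q - p' * q'| <= 2 * r * N.
Proof.
move=> p_le q'_le dp dq.
have -> : p * q - p' * q' = p * (q - q') + q' * (p - p') by ring.
apply: le_trans (ler_normD _ _) _; rewrite !normrM.
have := ler_pM (normr_ge0 _) (normr_ge0 _) p_le dq.
have := ler_pM (normr_ge0 _) (normr_ge0 _) q'_le dp; lra.
Qed.

Lemma normr_subB_le (R : realType) (a b c d : R) :
  `|(a - b) - (c - d)| <= `|a - c| + `|b - d|.
Proof. by rewrite (_ : _ - _ = (a - c) - (b - d)) ?ler_normB //; ring. Qed.

Lemma ord3P (P : 'I_3 -> Prop) : P 0 -> P 1 -> P 2 -> forall i, P i.
Proof.
move=> P0 P1 P2 [[|[|[|//]]] lt_i3]; [move: P0 | move: P1 | move: P2];
  by congr P; apply: val_inj.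
Qed.

Section Cyclic.
Variable R : realType.

Definition Tcyc : tensor R 3 3 5 := fun i j k =>
  match (k : nat) with
  | 3 => (j == i + 1)%:R
  | 4 => (i == j + 1)%:R
  | _ => ((i == k :> nat) && (j == k :> nat))%:R
  end.

Definition rot n : {perm 'I_n.+3} := tperm 0 1 * tperm 1 2.

Lemma Tcyc_rot i j k : Tcyc (rot 0 i) (rot 0 j) (rot 2 k) = Tcyc i j k.
Proof.
rewrite !permM /tperm !permE /=.
by case: i => [[|[|[|//]]] ?]; case: j => [[|[|[|//]]] ?]; case: k => [[|[|[|[|[|//]]]]] ?].
Qed.

End Cyclic.

Section CyclicCentre.
Variables (R : realType) (T : tensor R 3 3 5).
Hypothesis T_near : forall i j k, `|T i j k - Tcyc R i j k| < 1 / 1000.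

Definition coord (z : 'rV[R]_9) (m : nat) : R := z 0 (inord m).
Definition cyc_x z : 'rV[R]_5 := \row_k coord z k.
Definition cyc_vec z (o : nat) : 'cV[R]_3 := \col_i (if i == 0 then 1 else coord z (o + i)).
Definition cyc_d z := contract3 (fun i j k => T i j k - Tcyc R i j k) (cyc_x z).
Definition cyc_res z := cyc_vec z 4 *m (cyc_vec z 6)^T - cyc_d z.
(* [z] lists [x_0, ..., x_4, u_1, u_2, v_1, v_2], and [cyc_vec z 4], [cyc_vec z 6] are
   [u = (1, u_1, u_2)], [v = (1, v_1, v_2)]. Since [contract3 Tcyc x] is
   [[x_0, x_3, x_4], [x_4, x_1, x_3], [x_3, x_4, x_2]], the equation
   [contract3 T x = u v^T] says exactly that [z] is a fixed point of [cyc_map]. *)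
Definition cyc_map z : 'rV[R]_9 :=
  let r := cyc_res z in let d := cyc_d z in
  \row_(m < 9) nth 0 [:: r 0 0; r 1 1; r 2 2; r 1 2; r 2 1;
                         r 2 1 + d 1 0; r 1 2 + d 2 0; r 1 2 + d 0 1; r 2 1 + d 0 2] m.

Definition cyc_centre : 'rV[R]_9 := delta_mx 0 0.
Definition cyc_ball (z : 'rV[R]_9) := forall m, `|z 0 m - cyc_centre 0 m| <= 1 / 10.

Lemma cyc_ball_coord z m :
  cyc_ball z -> (m < 9)%N -> `|coord z m - (m == 0)%:R| <= 1 / 10.
Proof.
move=> z_ball lt_m9; have := z_ball (inord m); rewrite mxE eqxx /=.
by rewrite -(inj_eq (@ord_inj _)) inordK.
Qed.

Lemma cyc_ball_x z k : cyc_ball z -> `|cyc_x z 0 k| <= 11 / 10.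
Proof.
move=> z_ball.
have := cyc_ball_coord (m := k) z_ball (leq_trans (ltn_ord k) (isT : (5 <= 9)%N)).
rewrite mxE /coord; case: (_ == _); rewrite /= ?mulr1n ?subr0 !ler_norml => /andP [? ?];
  by apply/andP; split; lra.
Qed.

Lemma cyc_d_le z i j : cyc_ball z -> `|cyc_d z i j| <= 1 / 100.
Proof.
move=> z_ball; apply: le_trans (norm_contract3_le _ (fun i j k => ltW (T_near i j k)) i j) _.
have : \sum_k `|cyc_x z 0 k| <= \sum_(k < 5) 11 / 10 by apply: ler_sum => k _; exact: cyc_ball_x.
rewrite sumr_const card_ord -mulr_natl; lra.
Qed.

Lemma cyc_d_lip (z z' : 'rV[R]_9) (N : R) i j : (forall m, `|z 0 m - z' 0 m| <= N) ->
  `|cyc_d z i j - cyc_d z' i j| <= N / 200.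
Proof.
move=> zz'_le; have -> : cyc_d z i j - cyc_d z' i j =
    contract3 (fun i j k => T i j k - Tcyc R i j k) (cyc_x z - cyc_x z') i j.
  by rewrite !contract3E -sumrB; apply: eq_bigr => k _; rewrite !mxE; ring.
apply: le_trans (norm_contract3_le _ (fun i j k => ltW (T_near i j k)) i j) _.
have : \sum_k `|(cyc_x z - cyc_x z') 0 k| <= \sum_(k < 5) N.
  by apply: ler_sum => k _; rewrite !mxE; exact: zz'_le.
rewrite sumr_const card_ord -mulr_natl; lra.
Qed.

Lemma cyc_vec_le z o i :
  cyc_ball z -> (o <= 6)%N -> i != 0 -> `|cyc_vec z o i 0| <= 1 / 10.
Proof.
move=> z_ball o_le i_neq0; rewrite mxE (negbTE i_neq0).
have i_neq0' : (i : nat) != 0%N := i_neq0.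
have := cyc_ball_coord (m := o + i) z_ball; rewrite addn_eq0 (negbTE i_neq0') andbF subr0.
by apply; rewrite (leq_ltn_trans (leq_add o_le (leqnn i))) // -[9%N]/(6 + 3)%N ltn_add2l.
Qed.

Lemma cyc_vec_lip (z z' : 'rV[R]_9) (N : R) o i :
  0 <= N -> (forall m, `|z 0 m - z' 0 m| <= N) -> `|cyc_vec z o i 0 - cyc_vec z' o i 0| <= N.
Proof.
by move=> N_ge0 zz'_le; rewrite !mxE; case: (i == 0); rewrite ?subrr ?normr0 //; apply: zz'_le.
Qed.

Lemma cyc_resE z i j : cyc_res z i j = cyc_vec z 4 i 0 * cyc_vec z 6 j 0 - cyc_d z i j.
Proof. by rewrite !mxE big_ord1 !mxE. Qed.

Lemma cyc_map_ball z : cyc_ball z -> cyc_ball (cyc_map z).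
Proof.
move=> z_ball; have d_le i j := cyc_d_le i j z_ball.
have res00 : `|cyc_res z 0 0 - 1| <= 1 / 100.
  by rewrite cyc_resE !mxE /= mulr1 addrAC subrr add0r normrN.
have res_le i j : i != 0 -> j != 0 -> `|cyc_res z i j| <= 2 / 100.
  move=> i_neq0 j_neq0; rewrite cyc_resE; apply: le_trans (ler_normB _ _) _; rewrite normrM.
  have ui := cyc_vec_le z_ball (isT : (4 <= 6)%N) i_neq0.
  have vj := cyc_vec_le z_ball (isT : (6 <= 6)%N) j_neq0.
  have := ler_pM (normr_ge0 _) (normr_ge0 _) ui vj; have := d_le i j; lra.
have res_d_le i j i' j' : i != 0 -> j != 0 -> `|cyc_res z i j + cyc_d z i' j'| <= 1 / 10.
  move=> i_neq0 j_neq0; apply: le_trans (ler_normD _ _) _.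
  have := res_le i j i_neq0 j_neq0; have := d_le i' j'; lra.
move=> m; rewrite [cyc_map z 0 m]mxE [cyc_centre 0 m]mxE.
case: m => [[|[|[|[|[|[|[|[|[|//]]]]]]]]] ?] /=; rewrite ?mulr1n ?mulr0n ?subr0.
- by apply: le_trans res00 _; lra.
all: first [by apply: res_d_le | by apply: le_trans (res_le _ _ _ _) _; try lra].
Qed.

Lemma cyc_map_lip z z' N :
  cyc_ball z -> cyc_ball z' -> (forall m, `|z 0 m - z' 0 m| <= N) ->
  forall m, `|cyc_map z 0 m - cyc_map z' 0 m| <= 1 / 2 * N.
Proof.
move=> z_ball z'_ball zz'_le; have N_ge0 : 0 <= N := le_trans (normr_ge0 _) (zz'_le 0).
have d_lip i j := cyc_d_lip i j zz'_le.
have res00_lip : `|cyc_res z 0 0 - cyc_res z' 0 0| <= 1 / 2 * N.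
  rewrite !cyc_resE !mxE /= !mulr1 (_ : 1 - _ - _ = cyc_d z' 0 0 - cyc_d z 0 0); last by ring.
  by rewrite distrC; have := d_lip 0 0; lra.
have res_lip i j : i != 0 -> j != 0 -> `|cyc_res z i j - cyc_res z' i j| <= 21 / 100 * N.
  move=> i_neq0 j_neq0; rewrite !cyc_resE.
  have := normr_mulB_le (cyc_vec_le z_ball (isT : (4 <= 6)%N) i_neq0)
    (cyc_vec_le z'_ball (isT : (6 <= 6)%N) j_neq0) (cyc_vec_lip 4 i N_ge0 zz'_le)
    (cyc_vec_lip 6 j N_ge0 zz'_le).
  have := d_lip i j => ? ?; apply: le_trans (normr_subB_le _ _ _ _) _; lra.
have res_d_lip i j i' j' : i != 0 -> j != 0 ->
    `|cyc_res z i j + cyc_d z i' j' - (cyc_res z' i j + cyc_d z' i' j')| <= 1 / 2 * N.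
  move=> i_neq0 j_neq0; rewrite opprD addrACA; apply: le_trans (ler_normD _ _) _.
  by have := res_lip i j i_neq0 j_neq0; have := d_lip i' j'; lra.
move=> m; rewrite [cyc_map z 0 m]mxE [cyc_map z' 0 m]mxE.
case: m => [[|[|[|[|[|[|[|[|[|//]]]]]]]]] ?] /=.
- exact: res00_lip.
all: first [by apply: res_d_lip | by apply: le_trans (res_lip _ _ _ _) _; try lra].
Qed.

Lemma near_Tcyc_rank_one_slice : exists w (u v : 'cV[R]_3),
  [/\ contract3 T w = u *m v^T, near_delta 0 u & near_delta 0 v].
Proof.
have [||z z_ball z_fix] :=
  sup_ball_fixed_point (z0 := cyc_centre) _ _ cyc_map_ball cyc_map_lip.
- lra.
- apply/andP; split; lra.
have near_delta_vec o : (o <= 6)%N -> near_delta 0 (cyc_vec z o).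
  by move=> o_le; split=> [|i]; [rewrite mxE | exact: cyc_vec_le].
exists (cyc_x z), (cyc_vec z 4), (cyc_vec z 6); split; [|exact: near_delta_vec..].
have fixE m : (m < 9)%N -> coord z m =
    nth 0 [:: cyc_res z 0 0; cyc_res z 1 1; cyc_res z 2 2; cyc_res z 1 2; cyc_res z 2 1;
              cyc_res z 2 1 + cyc_d z 1 0; cyc_res z 1 2 + cyc_d z 2 0;
              cyc_res z 1 2 + cyc_d z 0 1; cyc_res z 2 1 + cyc_d z 0 2] m.
  by move=> lt_m9; rewrite /coord -{1}z_fix mxE inordK.
have := (fixE 0 isT, fixE 1 isT, fixE 2 isT, fixE 3 isT, fixE 4 isT, fixE 5 isT, fixE 6 isT,
  fixE 7 isT, fixE 8 isT); rewrite /= => -[[[[[[[[e0 e1] e2] e3] e4] e5] e6] e7] e8].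
apply/matrixP => i j; rewrite (contract3_split _ (Tcyc R)) mxE -/(cyc_d z).
have -> : (cyc_vec z 4 *m (cyc_vec z 6)^T) i j = cyc_res z i j + cyc_d z i j.
  by rewrite cyc_resE subrK mxE big_ord1 !mxE.
congr (_ + _); rewrite contract3E !big_ord_recr big_ord0 /=.
have cyc_xE k : cyc_x z 0 k = coord z k by rewrite mxE.
rewrite !cyc_xE; move: i j; apply: ord3P; apply: ord3P; rewrite /Tcyc /=.
all: first [lra | rewrite cyc_resE !mxE /=; lra].
Qed.

End CyclicCentre.

Section CyclicTypical.
Variable R : realType.

Lemma near_Tcyc_rot (T : tensor R 3 3 5) (e : R) :
  (forall i j k, `|T i j k - Tcyc R i j k| < e) ->
  forall i j k, `|T (rot 0 i) (rot 0 j) (rot 2 k) - Tcyc R i j k| < e.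
Proof. by move=> T_near i j k; rewrite -Tcyc_rot. Qed.

Lemma near_Tcyc_rank_one_slice_rot n (T : tensor R 3 3 5) :
  (forall i j k, `|T i j k - Tcyc R i j k| < 1 / 1000) ->
  exists w (u v : 'cV[R]_3),
    [/\ contract3 T w = u *m v^T, near_delta ((rot 0 ^+ n)%g 0) u
       & near_delta ((rot 0 ^+ n)%g 0) v].
Proof.
elim: n T => [|n IHn] T T_near.
  by rewrite expg0 perm1; exact: near_Tcyc_rank_one_slice.
have [w [u [v [Tw u_c v_c]]]] := IHn _ (near_Tcyc_rot T_near).
exists (col_perm (rot 2)^-1%g w), (row_perm (rot 0)^-1%g u), (row_perm (rot 0)^-1%g v).
by rewrite expgSr permM; split; [exact: rank_one_slice_perm | exact: near_delta_perm..].
Qed.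

Lemma rot_orbit (c : 'I_3) : exists n, (rot 0 ^+ n)%g 0 = c.
Proof.
move: c; apply: ord3P; [exists 0%N | exists 2%N | exists 1%N];
  by rewrite ?expg0 ?perm1 // !expgS expg0 mulg1 ?permM /tperm !permE.
Qed.

Lemma unitmx_near_delta (U : 'M[R]_3) : (forall c, near_delta c (col c U)) -> U \in unitmx.
Proof.
move=> U_cols; apply: (unitmx_near1 (e := 1 / 10)); first lra.
move=> i c; have [] := U_cols c; rewrite mxE => Ucc Uic.
case: (eqVneq i c) => [-> | i_neq] /=; first by rewrite Ucc subrr normr0; lra.
by have := Uic i i_neq; rewrite mxE subr0.
Qed.

Lemma typical_subrank_Tcyc : typical_subrank R 3 3 5 3.
Proof.
exists (Tcyc R), (1 / 1000); split=> [|T T_near]; first lra.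
split=> [|s]; last exact: subrank_attains_le.
have /fin_all_exists [W W_slice] :
    forall c : 'I_3, exists t : 'rV[R]_5 * 'cV[R]_3 * 'cV[R]_3,
    [/\ contract3 T t.1.1 = t.1.2 *m t.2^T, near_delta c t.1.2 & near_delta c t.2].
  move=> c; have [n <-] := rot_orbit c.
  by have [w [u [v slice]]] := near_Tcyc_rank_one_slice_rot n T_near; exists (w, u, v).
pose U := \matrix_(i, c) (W c).1.2 i 0; pose V := \matrix_(i, c) (W c).2 i 0.
have colU c : col c U = (W c).1.2 by apply/colP => i; rewrite !mxE.
have colV c : col c V = (W c).2 by apply/colP => i; rewrite !mxE.
apply: (subrank_attains_rank_one (U := U) (V := V) (X := \matrix_c (W c).1.1)).
- by apply: unitmx_near_delta => c; rewrite colU; have [] := W_slice c.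
- by apply: unitmx_near_delta => c; rewrite colV; have [] := W_slice c.
by move=> c; rewrite rowK colU colV; have [] := W_slice c.
Qed.

End CyclicTypical.

Theorem theorem4p10 (R : realType) (r : nat) :
  typical_subrank R 3 3 5 r <-> r = 2%N \/ r = 3%N.
Proof.
split=> [typical_r | [-> | ->]]; last 2 first.
- exact: typical_subrank_Tsym.
- exact: typical_subrank_Tcyc.
have r_ge2 : (2 <= r)%N.
  by apply: (typical_subrank_ge (f := pick_rows) (g := pick_cols) (h := pick_slices)) typical_r;
    exact: lift_inj.
have r_le3 : (r <= 3)%N := typical_subrank_le typical_r.
by case: r r_ge2 r_le3 {typical_r} => [|[|[|[|r]]]] //= _ _; [left | right].
Qed.
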